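(* Let $p$ be an odd prime, let $m,k$ be integers with $0<k\le\lfloor m/2\rfloor$ and $m/\gcd(m,k)$ odd, and put $l=\gcd(m,k)$. Let $\alpha\in\mathbb{F}_{p^l}$, $\alpha\neq 0$, be a non-square in $\mathbb{F}_{p^m}$, and let $\sigma(x)=x^{p^r}$ with $0\le r\le\lfloor m/2\rfloor$. With $x\circ_k y=x^{p^k}y+y^{p^k}x$, define on $\mathbb{F}_{p^m}^2$ the presemifield multiplication $(a,b)*(c,d)=(a\circ_k c+\alpha\,\sigma(b\circ_k d),\ ad+bc)$, let $L(a,b)=(a,b)*(1,0)=(a+a^{p^k},b)$ (an additive bijection of $\mathbb{F}_{p^m}^2$), and let $\mathbb{S}_{k,\sigma}=(\mathbb{F}_{p^m}^2,+,\star)$ be the semifield with multiplication defined by $L(x)\star L(y)=x*y$. Then: (1) if $\sigma$ is the identity, the middle nucleus $N_m(\mathbb{S}_{k,\sigma})$ is isomorphic to $\mathbb{F}_{p^{2l}}$; (2) if $\sigma$ is not the identity, the middle nucleus $N_m(\mathbb{S}_{k,\sigma})$ is isomorphic to $\mathbb{F}_{p^l}$.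
   Context: The middle nucleus of a semifield $(\mathbb{S},+,\star)$ is $N_m(\mathbb{S})=\{a\in\mathbb{S}:(x\star a)\star y=x\star(a\star y)\text{ for all }x,y\in\mathbb{S}\}$; it is a finite field under the semifield operations. The multiplication $*$ defines a presemifield (distributive, no zero divisors), and $\star$ defines a (commutative) semifield with identity $L(1,0)$. *)

From HB Require Import structures.
From mathcomp Require Import all_boot all_order all_algebra all_field.
Set Implicit Arguments. Unset Strict Implicit. Unset Printing Implicit Defensive.
Import GRing.Theory.
Local Open Scope ring_scope.

(* The field F plays the role of F_{p^m}; pairs F * F model F_{p^m}^2. *)
Section Semifield.
Variables (F : finFieldType) (p k r : nat) (alpha : F).

Definition circk (x y : F) : F := x ^+ (p ^ k) * y + y ^+ (p ^ k) * x.

Definition sigmar (x : F) : F := x ^+ (p ^ r).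

Definition pmul (x y : F * F) : F * F :=
  (circk x.1 y.1 + alpha * sigmar (circk x.2 y.2), x.1 * y.2 + x.2 * y.1).

(* L(a,b) = (a,b)*(1,0) = (a + a^{p^k}, b) *)
Definition Lmap (x : F * F) : F * F := (x.1 + x.1 ^+ (p ^ k), x.2).

(* inverse of L (L is a bijection under the hypotheses of the theorem) *)
Definition Linv (z : F * F) : F * F := odflt (0, 0) [pick x : F * F | Lmap x == z].

Definition smul (u v : F * F) : F * F := pmul (Linv u) (Linv v).

Definition sadd (u v : F * F) : F * F := (u.1 + v.1, u.2 + v.2).

Definition middle_nucleus : {set F * F} :=
  [set a | [forall x : F * F, forall y : F * F,
             smul (smul x a) y == smul x (smul a y)]].

Definition nucleus_iso (K : finFieldType) : Prop :=
  exists phi : K -> F * F,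
    [/\ injective phi,
        (forall a, a \in middle_nucleus <-> exists x, phi x = a),
        (forall x y, phi (x + y) = sadd (phi x) (phi y)),
        (forall x y, phi (x * y) = smul (phi x) (phi y))
      & phi 1 = Lmap (1, 0)].

End Semifield.

(* Write q = p^k and l = gcd(m, k); as m/l is odd, gcd(2k, m) = l, which makes L bijective.  Comparing second coordinates of
   (L(x) * L(c, d)) * L(0, 1) and L(x) * (L(c, d) * L(0, 1)) gives, for some e and all t,
     tc + (tc)^q = t^q c + c^q t   and   te + (te)^q = alpha sigma(t^q d + d^q t),
   polynomial identities of degree < p^m, so their leading coefficients vanish.  Hence c,
   fixed by x |-> x^q, lies in F_{p^l}; d lies in F_{p^l} if sigma = id, and d = 0
   otherwise; conversely all such L(c, d) are in the nucleus.  Thus a + b sqrt(alpha) |->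
   L(a, b) identifies F_{p^l}(sqrt alpha) = F_{p^{2l}} with the nucleus, resp. a |-> L(a, 0)
   identifies F_{p^l} with it.  An abstract field of the right order is matched with these
   by embedding its subfield of order p^l into F, sending powers of a primitive root g to
   powers of a root in F of the minimal polynomial of g over F_p. *)

From HB Require Import structures.
From mathcomp Require Import all_boot all_order all_algebra all_field.
From mathcomp Require Import cyclic ring zify.
From Stdlib Require Import Classical.
Set Implicit Arguments. Unset Strict Implicit. Unset Printing Implicit Defensive.
Import GRing.Theory.
Local Open Scope ring_scope.

(** * Frobenius powers *)

Section FrobeniusPowers.
Variables (R : fieldType) (p : nat).
Hypothesis pcharRp : p \in [pchar R].

Lemma pchar_natX n : [pchar R].-nat (p ^ n)%N.
Proof.
by rewrite (eq_pnat _ (pcharf_eq pcharRp)) pnatX pnat_id ?(pcharf_prime pcharRp).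
Qed.

Lemma exprpD n (x y : R) : (x + y) ^+ (p ^ n) = x ^+ (p ^ n) + y ^+ (p ^ n).
Proof. exact/exprDn_pchar/pchar_natX. Qed.

Lemma exprpN n (x : R) : (- x) ^+ (p ^ n) = - x ^+ (p ^ n).
Proof. exact/exprNn_pchar/pchar_natX. Qed.

Lemma exprpB n (x y : R) : (x - y) ^+ (p ^ n) = x ^+ (p ^ n) - y ^+ (p ^ n).
Proof. by rewrite exprpD exprpN. Qed.

Lemma expr0p n : (0 : R) ^+ (p ^ n) = 0.
Proof. by rewrite expr0n expn_eq0 eqn0Ngt prime_gt0 ?(pcharf_prime pcharRp). Qed.

Lemma natr_exprp n a : (n%:R : R) ^+ (p ^ a) = n%:R.
Proof. by elim: n => [|n IHn]; rewrite ?expr0p // -nat1r exprpD expr1n IHn. Qed.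

End FrobeniusPowers.

Lemma expr_fixX (R : pzSemiRingType) (x : R) q j : x ^+ q = x -> x ^+ (q ^ j) = x.
Proof.
move=> xq; elim: j => [|j IHj]; first by rewrite expr1.
by rewrite expnS exprM xq IHj.
Qed.

Lemma exprp_fix_dvd (R : pzSemiRingType) (x : R) p a b :
  (a %| b)%N -> x ^+ (p ^ a) = x -> x ^+ (p ^ b) = x.
Proof. by case/dvdnP=> j ->; rewrite mulnC expnM; apply: expr_fixX. Qed.

Lemma exprp_fix_gcd (R : pzSemiRingType) (x : R) p a b : (0 < a)%N ->
  x ^+ (p ^ a) = x -> x ^+ (p ^ b) = x -> x ^+ (p ^ gcdn a b) = x.
Proof.
move=> a_gt0 xa xb; have [u _ /dvdnP[v Dv]] := Bezoutl b a_gt0.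
have xav : x ^+ (p ^ (v * a)) = x by rewrite mulnC expnM expr_fixX.
have xbu : x ^+ (p ^ (u * b)) = x by rewrite mulnC expnM expr_fixX.
by rewrite -{2}xav -Dv expnD mulnC exprM xbu.
Qed.

Lemma gcdn_double_odd m k : (0 < k)%N -> odd (m %/ gcdn m k) ->
  gcdn (2 * k) m = gcdn m k.
Proof.
move=> k_gt0; set g := gcdn m k => odd_mg.
have g_gt0 : (0 < g)%N by rewrite gcdn_gt0 k_gt0 orbT.
have Dm : m = (m %/ g * g)%N by rewrite divnK ?dvdn_gcdl.
have Dk : k = (k %/ g * g)%N by rewrite divnK ?dvdn_gcdr.
have coprime_mk : gcdn (m %/ g) (k %/ g) = 1%N.
  by apply/eqP; rewrite -(eqn_pmul2r g_gt0) mul1n muln_gcdl -Dm -Dk.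
rewrite gcdnC Dm Dk mulnA -muln_gcdl [(2 * _)%N]mulnC Gauss_gcdl ?coprimen2 //.
by rewrite coprime_mk mul1n.
Qed.

(** * Polynomial identities over a finite field *)

Lemma finField_poly_eq0 (F : finFieldType) (P : {poly F}) :
  (size P <= #|F|)%N -> (forall x, P.[x] = 0) -> P = 0.
Proof.
move=> szP P0; apply: (@roots_geq_poly_eq0 _ P (enum F)); last by rewrite -cardE.
  by apply/allP=> x _; rewrite /root P0.
exact: enum_uniq.
Qed.

Lemma monomial_identity_lead_eq0 (F : finFieldType) (A B C D : F) n1 n2 n3 :
  (n2 < n1)%N -> (n3 < n1)%N -> (1 < n1 < #|F|)%N ->
  (forall x : F, A * x ^+ n1 + B * x ^+ n2 + C * x ^+ n3 + D * x = 0) -> A = 0.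
Proof.
move=> n21 n31 /andP[n1_gt1 n1_lt] ABCD.
pose P : {poly F} := A *: 'X^n1 + B *: 'X^n2 + C *: 'X^n3 + D *: 'X.
have szP : (size P <= n1.+1)%N.
  apply/leq_sizeP=> j lt_n1j; rewrite !coefD !coefZ !coefXn coefX.
  by rewrite !gtn_eqF ?mulr0 ?addr0 //; lia.
have /(congr1 (coefp n1)) : P = 0.
  by apply: finField_poly_eq0 => [|x]; [lia | rewrite /P !hornerE ABCD].
rewrite /= coef0 !coefD !coefZ !coefXn coefX eqxx.
by rewrite !gtn_eqF // !mulr0 mulr1 !addr0.
Qed.

Lemma pchar_two_neq0 (R : nzRingType) p : p \in [pchar R] -> odd p -> (2 : R) != 0.
Proof.
move=> pcharRp p_odd; rewrite -[2]/(2%:R) -(dvdn_pcharf pcharRp).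
by rewrite gtnNdvd ?odd_prime_gt2 ?(pcharf_prime pcharRp).
Qed.

(** * Embedding a Frobenius-fixed subfield *)

Section FpEvaluation.
Variables (p : nat) (R : fieldType).
Hypothesis pcharRp : p \in [pchar R].
Local Notation Rp := (pPrimeCharType pcharRp).

(* Evaluation of polynomials over the prime field; the cast views R as an 'F_p-algebra. *)
Definition evFp (h : R) : {poly 'F_p} -> R := horner_alg (h : Rp).

Fact evFp_is_nmod_morphism h : nmod_morphism (evFp h).
Proof.
by split; [exact: (rmorph0 (horner_alg (h : Rp))) | exact: (rmorphD (horner_alg (h : Rp)))].
Qed.

Fact evFp_is_monoid_morphism h : monoid_morphism (evFp h).
Proof.
by split; [exact: (rmorph1 (horner_alg (h : Rp))) | exact: (rmorphM (horner_alg (h : Rp)))].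
Qed.

HB.instance Definition _ h :=
  GRing.isNmodMorphism.Build _ _ (evFp h) (evFp_is_nmod_morphism h).
HB.instance Definition _ h :=
  GRing.isMonoidMorphism.Build _ _ (evFp h) (evFp_is_monoid_morphism h).

Lemma evFpX h : evFp h 'X = h.
Proof. exact: (horner_algX (h : Rp)). Qed.

Lemma evFpXn h n : evFp h 'X^n = h ^+ n.
Proof. by rewrite rmorphXn /= evFpX. Qed.

Lemma evFpC h c : evFp h c%:P = (c : nat)%:R.
Proof. by rewrite /evFp horner_algC; apply: mulr1. Qed.

Lemma evFpC_eq0 h c : (evFp h c%:P == 0) = (c == 0).
Proof. by rewrite /evFp horner_algC; apply: (fmorph_eq0 (in_alg Rp)). Qed.

Lemma evFp_frob_fixed a h Q : h ^+ (p ^ a) = h -> evFp h Q ^+ (p ^ a) = evFp h Q.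
Proof.
move=> hh; elim/poly_ind: Q => [|Q c IHQ]; first by rewrite rmorph0 expr0p.
by rewrite rmorphD rmorphM /= evFpX evFpC !exprpD // exprMn IHQ hh natr_exprp.
Qed.

Lemma evFp_min_annihilator g Q0 : Q0 != 0 -> evFp g Q0 = 0 ->
  exists f, [/\ f != 0, evFp g f = 0 & forall Q, evFp g Q = 0 -> f %| Q].
Proof.
have [n] := ubnP (size Q0); elim: n Q0 => // n IHn Q szQ Q_neq0 gQ.
have [[Q' [Q'_neq0 gQ' szQ']] | noQ'] :=
  classic (exists Q', [/\ Q' != 0, evFp g Q' = 0 & (size Q' < size Q)%N]).
  by apply: (IHn Q') => //; exact: leq_trans szQ' szQ.
exists Q; split=> // Q1 gQ1; apply/negPn/negP=> Q_ndvd; apply: noQ'.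
exists (Q1 %% Q); split; [exact: Q_ndvd | | by rewrite ltn_modp].
by move: gQ1; rewrite {1}(divp_eq Q1 Q) rmorphD rmorphM /= gQ mulr0 add0r.
Qed.

End FpEvaluation.

Lemma evFp_root_of_dvd (F : finFieldType) p (pcharFp : p \in [pchar F])
    (f : {poly 'F_p}) :
  (1 < size f)%N -> f %| 'X^#|F| - 'X -> exists h : F, evFp pcharFp h f = 0.
Proof.
move=> sz_f f_dvd; set Fp := pPrimeCharType pcharFp.
have : map_poly (in_alg Fp) f %| \prod_(x : Fp) ('X - x%:P).
  rewrite -finField_genPoly -(map_polyXn (in_alg Fp)) -(map_polyX (in_alg Fp)).
  by rewrite -rmorphB dvdp_map.
case/dvdp_prod_XsubC=> ms f_eqp; have := eqp_size f_eqp.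
rewrite size_map_poly size_prod_XsubC; case Dr: (mask ms _) => [|x r] /=.
  by move=> sz1; rewrite sz1 in sz_f.
move=> _; exists x; apply/eqP; have := eqp_root f_eqp x; rewrite /root => ->.
by rewrite Dr big_cons hornerM hornerXsubC subrr mul0r.
Qed.

Lemma finField_prim_root (K : finFieldType) n : (n %| #|K|.-1)%N ->
  exists g : K, n.-primitive_root g.
Proof.
move=> n_dvd; have K_gt1 := finNzRing_gt1 K; pose N := #|K|.-1.
have N_gt0 : (0 < N)%N by rewrite /N -subn1 subn_gt0.
have DK : #|K| = N.+1 by rewrite /N prednK // ltnW.
have roots : all N.-unity_root (enum [pred x : K | x != 0]).
  apply/allP=> x; rewrite mem_enum inE unity_rootE => x_neq0; apply/eqP.
  by apply: (mulfI x_neq0); rewrite mulr1 -exprS -DK expf_card.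
have sz : (N <= size (enum [pred x : K | x != 0%R]))%N by rewrite -cardE (cardC1 (0 : K)).
have /hasP[w _ prim_w] := has_prim_root N_gt0 roots (enum_uniq _) sz.
by exists (w ^+ (N %/ n)); apply: dvdn_prim_root.
Qed.

Lemma frob_fixed_prim_root (R : fieldType) q (g x : R) :
  (0 < q)%N -> q.-1.-primitive_root g -> x != 0 -> x ^+ q = x ->
  exists i : 'I_q.-1, x = g ^+ i.
Proof.
move=> q_gt0 prim_g x_neq0 xq; have /(prim_rootP prim_g)[i ->] : x ^+ q.-1 = 1.
  by apply: (mulfI x_neq0); rewrite mulr1 -exprS prednK.
by exists i.
Qed.

Lemma prim_root_pred_expr (R : nzRingType) q (g : R) :
  (0 < q)%N -> q.-1.-primitive_root g -> g ^+ q = g.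
Proof. by move=> q_gt0 prim_g; rewrite -(prednK q_gt0) exprS prim_expr_order ?mulr1. Qed.

Lemma card_frob_fixed_le (R : finFieldType) q : (1 < q)%N ->
  (#|[set x : R | x ^+ q == x]| <= q)%N.
Proof.
move=> q_gt1; pose P : {poly R} := 'X^q - 'X.
have szP : size P = q.+1 by rewrite size_polyDl ?size_polyXn // size_polyN size_polyX.
have P_neq0 : P != 0 by rewrite -size_poly_eq0 szP.
rewrite cardE -ltnS -szP max_poly_roots ?enum_uniq //.
by apply/allP=> x; rewrite mem_enum inE /root !hornerE => /eqP ->; rewrite subrr.
Qed.

Lemma card_frob_fixed_ge (R : finFieldType) q (g : R) :
  (1 < q)%N -> q.-1.-primitive_root g -> (q <= #|[set x : R | x ^+ q == x]|)%N.
Proof.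
move=> q_gt1 prim_g; have g_q := prim_root_pred_expr (ltnW q_gt1) prim_g.
have g_neq0 : g != 0.
  apply/eqP=> g0; have := prim_expr_order prim_g.
  by rewrite g0 expr0n -subn1 eqn0Ngt subn_gt0 q_gt1 => /eqP; rewrite eq_sym oner_eq0.
pose G := [set g ^+ (val i) | i : 'I_q.-1].
have cardG : #|G| = q.-1.
  rewrite card_imset ?card_ord // => i j /eqP.
  by rewrite (eq_prim_root_expr prim_g) !modn_small ?ltn_ord // => /eqP/val_inj.
have G0 : 0 \notin G.
  by apply/imsetP=> -[i _] /eqP; rewrite eq_sym expf_eq0 (negbTE g_neq0) andbF.
have /subset_leq_card : 0 |: G \subset [set x : R | x ^+ q == x].
  apply/subsetP=> x; rewrite !inE => /orP[/eqP-> | /imsetP[i _ ->]].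
    by rewrite expr0n gtn_eqF ?(ltnW q_gt1).
  by rewrite -exprM mulnC exprM g_q.
by rewrite cardsU1 G0 cardG add1n prednK // ltnW.
Qed.

Section FrobeniusFixedEmbedding.
Variables (p a m : nat) (K F : finFieldType).
Hypotheses (pcharKp : p \in [pchar K]) (cardF : #|F| = (p ^ m)%N).
Hypotheses (a_gt0 : (0 < a)%N) (a_dvd_m : (a %| m)%N).
Local Notation q := (p ^ a)%N.

Let pcharFp : p \in [pchar F].
Proof. exact: card_finPcharP cardF (pcharf_prime pcharKp). Qed.

Let q_gt1 : (1 < q)%N.
Proof. by rewrite -{1}(expn0 p) ltn_exp2l // prime_gt1 // (pcharf_prime pcharKp). Qed.

Section Transfer.
Variables (g : K) (f : {poly 'F_p}) (h : F).
Hypotheses (prim_g : q.-1.-primitive_root g) (hf : evFp pcharFp h f = 0).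
Hypothesis f_dvd : forall Q, evFp pcharKp g Q = 0 -> f %| Q.
Local Notation evg := (evFp pcharKp g).
Local Notation evh := (evFp pcharFp h).

(* g ^+ i is sent to h ^+ i, where h is a root in F of the minimal polynomial f of g. *)
Definition transfer (x : K) : F :=
  if [pick i : 'I_q.-1 | g ^+ i == x] is Some i then h ^+ i else 0.

Let evh_eq0 Q : evg Q = 0 -> evh Q = 0.
Proof. by move/f_dvd/divpK <-; rewrite rmorphM /= hf mulr0. Qed.

Let evh_eq Q1 Q2 : evg Q1 = evg Q2 -> evh Q1 = evh Q2.
Proof.
move=> eQ; apply/eqP; rewrite -subr_eq0 -rmorphB /= evh_eq0 //.
by rewrite rmorphB /= eQ subrr.
Qed.

Let g_frob : g ^+ q = g.
Proof. exact: prim_root_pred_expr (ltnW q_gt1) prim_g. Qed.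

Let h_frob : h ^+ q = h.
Proof.
apply/eqP; rewrite -subr_eq0; apply/eqP.
have := @evh_eq0 ('X^q - 'X); rewrite !rmorphB /= !evFpXn !evFpX; apply.
by rewrite g_frob subrr.
Qed.

Lemma frob_fixed_evFp x : x ^+ q = x -> exists Q, evg Q = x.
Proof.
have [-> _|x_neq0 xq] := eqVneq x 0; first by exists 0; rewrite rmorph0.
have [i ->] := frob_fixed_prim_root (ltnW q_gt1) prim_g x_neq0 xq.
by exists 'X^i; rewrite evFpXn.
Qed.

Lemma transferE Q : transfer (evg Q) = evh Q.
Proof.
rewrite /transfer; case: pickP => [i /eqP gi | no_i].
  by rewrite -(evFpXn pcharFp); apply: evh_eq; rewrite evFpXn gi.
rewrite evh_eq0 //; apply/eqP; apply: contraT => evgQ_neq0.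
have := evFp_frob_fixed pcharKp Q g_frob.
case/(frob_fixed_prim_root (ltnW q_gt1) prim_g evgQ_neq0) => i gi.
by have := no_i i; rewrite gi eqxx.
Qed.

Lemma transferD x y : x ^+ q = x -> y ^+ q = y -> transfer (x + y) = transfer x + transfer y.
Proof.
move=> /frob_fixed_evFp[Q1 <-] /frob_fixed_evFp[Q2 <-].
by rewrite -rmorphD /= !transferE rmorphD.
Qed.

Lemma transferM x y : x ^+ q = x -> y ^+ q = y ->
  transfer (x * y) = transfer x * transfer y.
Proof.
move=> /frob_fixed_evFp[Q1 <-] /frob_fixed_evFp[Q2 <-].
by rewrite -rmorphM /= !transferE rmorphM.
Qed.

Lemma transfer1 : transfer 1 = 1.
Proof. by rewrite -(rmorph1 evg) transferE rmorph1. Qed.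

Lemma transfer_frob_fixed x : x ^+ q = x -> transfer x ^+ q = transfer x.
Proof.
by move=> /frob_fixed_evFp[Q <-]; rewrite transferE evFp_frob_fixed ?h_frob.
Qed.

Lemma transfer_inj x y : x ^+ q = x -> y ^+ q = y -> transfer x = transfer y -> x = y.
Proof.
move=> /frob_fixed_evFp[Q1 <-] /frob_fixed_evFp[Q2 <-]; rewrite !transferE => eQ.
apply/eqP; rewrite -subr_eq0 -rmorphB /=; apply: contraT => u_neq0.
set u := evg (Q1 - Q2) in u_neq0 *.
have /frob_fixed_evFp[Q3 eQ3] : u^-1 ^+ q = u^-1 by rewrite exprVn evFp_frob_fixed.
have : evh ((Q1 - Q2) * Q3) = 1.
  by rewrite -(rmorph1 evh); apply: evh_eq; rewrite rmorphM /= eQ3 mulfV ?rmorph1.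
by rewrite rmorphM rmorphB /= eQ subrr mul0r => /eqP; rewrite eq_sym oner_eq0.
Qed.

Lemma transfer_onto w : w ^+ q = w -> exists2 x, x ^+ q = x & transfer x = w.
Proof.
move=> wq; pose SK := [set x : K | x ^+ q == x]; pose SF := [set w : F | w ^+ q == w].
have inj_transfer : {in SK &, injective transfer}.
  by move=> x y; rewrite !inE => /eqP xq /eqP yq; apply: transfer_inj.
have sub_SF : transfer @: SK \subset SF.
  apply/subsetP=> _ /imsetP[x xSK ->].
  by move: xSK; rewrite !inE => /eqP/transfer_frob_fixed->.
have /setP/(_ w) : transfer @: SK = SF.
  apply/eqP; rewrite eqEcard sub_SF card_in_imset //.
  exact: leq_trans (card_frob_fixed_le F q_gt1) (card_frob_fixed_ge q_gt1 prim_g).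
by rewrite inE wq eqxx => /imsetP[x]; rewrite inE => /eqP; exists x.
Qed.

End Transfer.

Lemma frob_fixed_embedding : (q.-1 %| #|K|.-1)%N ->
  exists iota : K -> F, [/\ iota 1 = 1,
    (forall x y, x ^+ q = x -> y ^+ q = y -> iota (x + y) = iota x + iota y),
    (forall x y, x ^+ q = x -> y ^+ q = y -> iota (x * y) = iota x * iota y),
    (forall x y, x ^+ q = x -> y ^+ q = y -> iota x = iota y -> x = y) &
    (forall w, w ^+ q = w <-> exists2 x, x ^+ q = x & iota x = w)].
Proof.
case/finField_prim_root=> g prim_g.
have g_frob := prim_root_pred_expr (ltnW q_gt1) prim_g.
pose Q0 : {poly 'F_p} := 'X^q - 'X.
have Q0_neq0 : Q0 != 0.
  by rewrite -size_poly_eq0 size_polyDl ?size_polyXn // size_polyN size_polyX.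
have gQ0 : evFp pcharKp g Q0 = 0 by rewrite rmorphB /= evFpXn evFpX g_frob subrr.
have [f [f_neq0 gf f_dvd]] := evFp_min_annihilator Q0_neq0 gQ0.
have sz_f : (1 < size f)%N.
  rewrite ltnNge; apply/negP=> /size1_polyC Df; move: gf f_neq0; rewrite Df.
  by move/eqP; rewrite evFpC_eq0 => /eqP->; rewrite eqxx.
have /(evFp_root_of_dvd pcharFp sz_f)[h hf] : f %| 'X^#|F| - 'X.
  by apply: f_dvd; rewrite rmorphB /= evFpXn evFpX cardF (exprp_fix_dvd a_dvd_m g_frob) subrr.
exists (transfer g h); split.
- exact: transfer1 prim_g hf f_dvd.
- exact: transferD prim_g hf f_dvd.
- exact: transferM prim_g hf f_dvd.
- exact: transfer_inj prim_g hf f_dvd.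
move=> w; split; first exact: (transfer_onto prim_g hf f_dvd).
by case=> x xq <-; apply: transfer_frob_fixed prim_g hf f_dvd _ xq.
Qed.

End FrobeniusFixedEmbedding.

(** * Adjoining a square root *)

Lemma frob_fixed_square (K : finFieldType) N (a : K) :
  odd N -> #|K| = (N * N)%N -> a ^+ N = a -> exists s, s * s = a.
Proof.
move=> N_odd cardK aN; have [->|a_neq0] := eqVneq a 0; first by exists 0; rewrite mulr0.
have N_gt1 : (1 < N)%N.
  by have := finNzRing_gt1 K; rewrite cardK; case: N {N_odd cardK aN} => [|[]].
have DNN : ((N * N).-1 = N.-1 * N.+1)%N by rewrite -!subn1; nia.
have [w prim_w] := finField_prim_root (dvdnn #|K|.-1); rewrite cardK DNN in prim_w.
have prim_g : N.-1.-primitive_root (w ^+ N.+1).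
  have := dvdn_prim_root prim_w (dvdn_mulr N.+1 (dvdnn N.-1)).
  by rewrite mulKn // -subn1 subn_gt0.
have [i Da] := frob_fixed_prim_root (ltnW N_gt1) prim_g a_neq0 aN.
exists (w ^+ (N.+1./2 * i)).
by rewrite -exprD addnn doubleMl even_halfK /= ?negbK // exprM Da.
Qed.

Section FrobeniusDecomposition.
Variables (K : fieldType) (p l : nat) (s : K).
Hypotheses (pcharKp : p \in [pchar K]) (p_odd : odd p) (s_neq0 : s != 0).
Local Notation N := (p ^ l)%N.
Hypotheses (s_frob : s ^+ N = - s) (frob_invol : forall x : K, x ^+ N ^+ N = x).

Let two_neq0 : (2 : K) != 0. Proof. exact: pchar_two_neq0 pcharKp p_odd. Qed.
Let two_frob : (2 : K) ^+ N = 2. Proof. exact: (natr_exprp pcharKp 2). Qed.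

(* Coordinates in the basis (1, s) of K over its subfield fixed by x |-> x ^+ N. *)
Definition re_part (x : K) := (x + x ^+ N) / 2.
Definition im_part (x : K) := (x - x ^+ N) / (2 * s).

Lemma re_part_fixed x : re_part x ^+ N = re_part x.
Proof. by rewrite /re_part expr_div_n two_frob exprpD // frob_invol addrC. Qed.

Lemma im_part_fixed x : im_part x ^+ N = im_part x.
Proof.
rewrite /im_part expr_div_n exprMn two_frob s_frob exprpB // frob_invol.
by field; rewrite s_neq0 two_neq0 oppr_eq0 s_neq0.
Qed.

Lemma re_im_partE x : x = re_part x + im_part x * s.
Proof. by rewrite /re_part /im_part; field; rewrite two_neq0 s_neq0. Qed.

Lemma re_im_part_uniq u v : u ^+ N = u -> v ^+ N = v ->
  re_part (u + v * s) = u /\ im_part (u + v * s) = v.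
Proof.
move=> uN vN; rewrite /re_part /im_part exprpD // exprMn uN vN s_frob.
by split; field; rewrite ?two_neq0 ?s_neq0.
Qed.

Lemma re_partD x y : re_part (x + y) = re_part x + re_part y.
Proof. by rewrite /re_part exprpD // -mulrDl addrACA. Qed.

Lemma im_partD x y : im_part (x + y) = im_part x + im_part y.
Proof. by rewrite /im_part exprpD // -mulrDl opprD addrACA. Qed.

End FrobeniusDecomposition.

(** * The middle nucleus *)

Lemma circkC (F : finFieldType) p k (x y : F) : circk p k x y = circk p k y x.
Proof. by rewrite /circk addrC. Qed.

Lemma pmulC (F : finFieldType) p k r (alpha : F) :
  commutative (pmul p k r alpha).
Proof.
move=> x y; rewrite /pmul circkC [circk _ _ x.2 _]circkC.
by congr (_, _); rewrite addrC mulrC [y.2 * _]mulrC.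
Qed.

Section Semifield.
Variables (F : finFieldType) (p m k r : nat) (alpha : F).
Hypotheses (p_pr : prime p) (p_odd : odd p) (cardF : #|F| = (p ^ m)%N).
Hypotheses (k_gt0 : (0 < k)%N) (k_le : (k <= m./2)%N).
Hypothesis odd_m_gcd : odd (m %/ gcdn m k).
Local Notation l := (gcdn m k).
Local Notation L := (@Lmap F p k).
Local Notation Linv := (@Linv F p k).
Local Notation pmul := (pmul p k r alpha).
Local Notation smul := (smul p k r alpha).
Local Notation sigma := (@sigmar F p r).
Local Notation circ := (@circk F p k).
Local Notation Nm := (middle_nucleus p k r alpha).

Let pcharFp : p \in [pchar F].
Proof. exact: card_finPcharP cardF p_pr. Qed.

Let p_gt1 : (1 < p)%N.
Proof. exact: prime_gt1. Qed.

Let l_gt0 : (0 < l)%N.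
Proof. by rewrite gcdn_gt0 k_gt0 orbT. Qed.

Let frob_card (x : F) : x ^+ (p ^ m) = x.
Proof. by rewrite -cardF expf_card. Qed.

Let expk_gt0 : (0 < p ^ k)%N.
Proof. by rewrite expn_gt0 ltnW. Qed.

Let expk_range : (1 < p ^ k < #|F|)%N.
Proof.
have lt_k_m : (k < m)%N by move: k_le; rewrite geq_half_double -muln2; lia.
by rewrite cardF -{1}(expn0 p) !ltn_exp2l // k_gt0.
Qed.

Let two_neq0 : (2 : F) != 0.
Proof. exact: pchar_two_neq0 pcharFp p_odd. Qed.

Let circ0r (x : F) : circ 0 x = 0.
Proof. by rewrite /circk expr0p // mul0r mulr0 addr0. Qed.

Let sigma0 : sigma 0 = 0.
Proof. exact: expr0p. Qed.

Lemma Lmap_fst_eq0 (a : F) : a + a ^+ (p ^ k) = 0 -> a = 0.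
Proof.
move=> aLa; have anti : a ^+ (p ^ k) = - a by apply/eqP; rewrite -addr_eq0 addrC aLa.
have a2k : a ^+ (p ^ (2 * k)) = a.
  by rewrite mul2n -addnn expnD exprM anti exprpN // anti opprK.
have al : a ^+ (p ^ l) = a.
  by rewrite -(gcdn_double_odd k_gt0 odd_m_gcd) exprp_fix_gcd ?muln_gt0.
move/eqP: aLa; rewrite (exprp_fix_dvd (dvdn_gcdr m k) al) -mulr2n -mulr_natl.
by rewrite mulf_eq0 (negbTE two_neq0) => /eqP.
Qed.

Lemma Lmap_inj : injective L.
Proof.
move=> [a b] [c d] [eq1 ->]; congr (_, _); apply/eqP; rewrite -subr_eq0; apply/eqP.
by apply: Lmap_fst_eq0; rewrite exprpB // addrACA eq1 -opprD subrr.
Qed.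

Lemma LmapK : cancel L Linv.
Proof.
move=> x; rewrite /Linv; case: pickP => [y /eqP/Lmap_inj // | /(_ x)].
by rewrite eqxx.
Qed.

Lemma LinvK : cancel Linv L.
Proof.
move=> z; have /codomP[x ->] : z \in codom L by apply: inj_card_onto => //; exact: Lmap_inj.
by rewrite LmapK.
Qed.

Lemma Linv_snd z : (Linv z).2 = z.2.
Proof. by rewrite -{2}[z]LinvK. Qed.

Lemma Linv_fst z : (Linv z).1 + (Linv z).1 ^+ (p ^ k) = z.1.
Proof. by rewrite -{3}[z]LinvK. Qed.

Lemma LmapD x y : L (x.1 + y.1, x.2 + y.2) = sadd (L x) (L y).
Proof. by rewrite /Lmap /sadd /= exprpD // addrACA. Qed.

Lemma smul_Lmap x y : smul (L x) (L y) = pmul x y.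
Proof. by rewrite /smul !LmapK. Qed.

Lemma Lmap_in_nucleus z (T : F * F -> F * F) :
  (forall x, pmul x z = L (T x)) -> (forall x y, pmul (T x) y = pmul x (T y)) ->
  L z \in Nm.
Proof.
move=> Tz Tmul; rewrite inE; apply/forallP=> x; apply/forallP=> y; apply/eqP.
by rewrite /smul LmapK Tz LmapK [pmul z _]pmulC Tz LmapK.
Qed.

Lemma Lmap_scalar_in_nucleus c : c ^+ (p ^ l) = c -> L (c, 0) \in Nm.
Proof.
move=> cl; have ck := exprp_fix_dvd (dvdn_gcdr m k) cl.
have circMl x y : circ (c * x) y = c * circ x y by rewrite /circk exprMn ck; ring.
have circMr x y : circ x (c * y) = c * circ x y by rewrite circkC circMl circkC.
apply: (@Lmap_in_nucleus _ (fun x => (c * x.1, c * x.2))) => [[x1 x2]|[x1 x2] [y1 y2]].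
  rewrite /pmul /Lmap /= [circ x2 _]circkC circ0r sigma0 /circk exprMn ck.
  by congr (_, _); ring.
by rewrite /pmul /= circMl circMr circMl circMr; congr (_, _); ring.
Qed.

Lemma Lmap_pair_in_nucleus c d : (forall x, sigma x = x) ->
  alpha ^+ (p ^ l) = alpha -> c ^+ (p ^ l) = c -> d ^+ (p ^ l) = d ->
  L (c, d) \in Nm.
Proof.
move=> sigma_id /(exprp_fix_dvd (dvdn_gcdr m k)) ak.
move=> /(exprp_fix_dvd (dvdn_gcdr m k)) ck /(exprp_fix_dvd (dvdn_gcdr m k)) dk.
apply: (@Lmap_in_nucleus _
  (fun x => (c * x.1 + alpha * d * x.2, d * x.1 + c * x.2))) => [[x1 x2]|[x1 x2] [y1 y2]].
  rewrite /pmul /Lmap /= !sigma_id /circk exprpD // !exprMn ck dk ak.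
  by congr (_, _); ring.
rewrite /pmul /= !sigma_id /circk !exprpD // !exprMn ck dk ak.
by congr (_, _); ring.
Qed.

Lemma nucleus_Lmap_identity c d : L (c, d) \in Nm ->
  exists e, forall x1 x2, let u := x1 * c + x2 * e in
    u + u ^+ (p ^ k) = circ x1 c + alpha * sigma (circ x2 d).
Proof.
rewrite inE => /forallP nuc; exists (Linv (pmul (c, d) (0, 1))).1 => x1 x2 u.
have Linv01 : Linv (0, 1) = (0, 1).
  by rewrite -[in RHS](LmapK (0, 1)) /Lmap /= expr0p // addr0.
have /forallP/(_ (0, 1))/eqP/(congr1 snd) := nuc (L (x1, x2)).
rewrite /smul !LmapK Linv01 /= !mulr1 !mulr0 !addr0 Linv_snd /= mulr1 mulr0 addr0 => Du.
by rewrite /u -Du Linv_fst.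
Qed.

Lemma nucleus_Lmap_fst c d : L (c, d) \in Nm -> c ^+ (p ^ l) = c.
Proof.
case/nucleus_Lmap_identity=> e De.
have ck : c ^+ (p ^ k) = c.
  apply/eqP; rewrite -subr_eq0; apply/eqP.
  apply: (@monomial_identity_lead_eq0 _ _ 0 0 (c - c ^+ (p ^ k)) _ _ _
            expk_gt0 expk_gt0 expk_range) => t; rewrite !mul0r !addr0.
  have := De t 0; rewrite /= mul0r addr0 circ0r sigma0 mulr0 addr0 /circk exprMn.
  by move/eqP; rewrite -subr_eq0 => /eqP <-; ring.
by rewrite gcdnC exprp_fix_gcd.
Qed.

Lemma nucleus_Lmap_snd_fixed c d : (forall x, sigma x = x) ->
  alpha ^+ (p ^ l) = alpha -> alpha != 0 -> L (c, d) \in Nm -> d ^+ (p ^ l) = d.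
Proof.
move=> sigma_id al alpha_neq0 /nucleus_Lmap_identity[e De].
have ak := exprp_fix_dvd (dvdn_gcdr m k) al.
have Dt t : t * e + t ^+ (p ^ k) * e ^+ (p ^ k) =
            alpha * (t ^+ (p ^ k) * d + d ^+ (p ^ k) * t).
  by have := De 0 t; rewrite /= mul0r add0r circ0r add0r sigma_id exprMn.
have ed : alpha * d = e ^+ (p ^ k).
  apply/eqP; rewrite -subr_eq0; apply/eqP.
  apply: (@monomial_identity_lead_eq0 _ _ 0 0 (alpha * d ^+ (p ^ k) - e) _ _ _
            expk_gt0 expk_gt0 expk_range) => t; rewrite !mul0r !addr0.
  by move/eqP: (esym (Dt t)); rewrite -subr_eq0 => /eqP <-; ring.
have ee : e = alpha * d ^+ (p ^ k).
  have := Dt 1; rewrite !expr1n !mul1r mulr1 -ed => D1.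
  by apply: (addIr (alpha * d)); rewrite D1; ring.
have d2k : d ^+ (p ^ (2 * k)) = d.
  apply: (mulfI alpha_neq0); rewrite ed ee exprMn ak -exprM -expnD addnn.
  by rewrite mul2n.
by rewrite -(gcdn_double_odd k_gt0 odd_m_gcd) exprp_fix_gcd ?muln_gt0.
Qed.

Lemma nucleus_Lmap_snd_eq0 c d : (exists x, sigma x != x) -> (r <= m./2)%N ->
  alpha != 0 -> L (c, d) \in Nm -> d = 0.
Proof.
move=> [x sigma_x] r_le alpha_neq0 /nucleus_Lmap_identity[e De].
have r_gt0 : (0 < r)%N.
  by move: sigma_x; rewrite /sigmar; case: (r) => //; rewrite expn0 expr1 eqxx.
have rk_lt : (r + k < m)%N.
  rewrite ltnNge; apply/negP=> le_m_rk; move: r_le k_le odd_m_gcd.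
  rewrite !geq_half_double -!muln2 => r_le' k_le'.
  have -> : m = (k * 2)%N by lia.
  by rewrite gcdnC gcdnMr mulKn.
have Dt t : t * e + t ^+ (p ^ k) * e ^+ (p ^ k) =
    alpha * (t ^+ (p ^ (k + r)) * d ^+ (p ^ r) + d ^+ (p ^ (k + r)) * t ^+ (p ^ r)).
  have := De 0 t; rewrite /= mul0r add0r circ0r add0r /sigmar /circk exprpD //.
  by rewrite !exprMn -!exprM -!expnD.
have : alpha * d ^+ (p ^ r) = 0.
  apply: (@monomial_identity_lead_eq0 _ _ (alpha * d ^+ (p ^ (k + r)))
    (- e ^+ (p ^ k)) (- e) (p ^ (k + r)) (p ^ r) (p ^ k)) => [|||t].
  - by rewrite ltn_exp2l // -{1}(add0n r) ltn_add2r.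
  - by rewrite ltn_exp2l // -{1}(addn0 k) ltn_add2l.
  - by rewrite cardF -{1}(expn0 p) !ltn_exp2l // addn_gt0 k_gt0 addnC.
  by move/eqP: (esym (Dt t)); rewrite -subr_eq0 => /eqP <-; ring.
by move/eqP; rewrite mulf_eq0 (negbTE alpha_neq0) expf_eq0 => /andP[_ /eqP].
Qed.

Lemma middle_nucleus_Lmap_sigma_id c d : (forall x, sigma x = x) ->
  alpha ^+ (p ^ l) = alpha -> alpha != 0 ->
  L (c, d) \in Nm <-> c ^+ (p ^ l) = c /\ d ^+ (p ^ l) = d.
Proof.
move=> sigma_id al alpha_neq0; split=> [Ncd | [cl dl]].
  by split; [apply: nucleus_Lmap_fst Ncd | apply: nucleus_Lmap_snd_fixed Ncd].
exact: Lmap_pair_in_nucleus.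
Qed.

Lemma middle_nucleus_Lmap_sigma_nid c d : (exists x, sigma x != x) ->
  (r <= m./2)%N -> alpha != 0 ->
  L (c, d) \in Nm <-> c ^+ (p ^ l) = c /\ d = 0.
Proof.
move=> sigma_nid r_le alpha_neq0; split=> [Ncd | [cl ->]].
  by split; [apply: nucleus_Lmap_fst Ncd | apply: nucleus_Lmap_snd_eq0 Ncd].
exact: Lmap_scalar_in_nucleus.
Qed.

Lemma nucleus_iso_Lmap (K : finFieldType) (psi : K -> F * F) :
  injective psi ->
  (forall c d, L (c, d) \in Nm <-> exists x, psi x = (c, d)) ->
  (forall x y, psi (x + y) = ((psi x).1 + (psi y).1, (psi x).2 + (psi y).2)) ->
  (forall x y, L (psi (x * y)) = pmul (psi x) (psi y)) ->
  psi 1 = (1, 0) ->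
  nucleus_iso p k r alpha K.
Proof.
move=> psi_inj psi_onto psiD psiM psi1; exists (L \o psi); split=> /=.
- by move=> x y /Lmap_inj/psi_inj.
- move=> a; rewrite -[a]LinvK.
  case: (Linv a) => c d; rewrite psi_onto.
  by split=> -[x Dx]; exists x; [rewrite Dx | apply: Lmap_inj].
- by move=> x y; rewrite psiD LmapD.
- by move=> x y; rewrite psiM smul_Lmap.
by rewrite psi1.
Qed.

Lemma nucleus_iso_sigma_nid (K : finFieldType) : (exists x, sigma x != x) ->
  (r <= m./2)%N -> alpha != 0 -> #|K| = (p ^ l)%N -> nucleus_iso p k r alpha K.
Proof.
move=> sigma_nid r_le alpha_neq0 cardK.
have pcharKp : p \in [pchar K] by apply: card_finPcharP cardK p_pr.
have [|iota [iota1 iotaD iotaM iota_inj iota_onto]] :=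
  frob_fixed_embedding pcharKp cardF l_gt0 (dvdn_gcdl m k).
  by rewrite cardK dvdnn.
have Kfix (x : K) : x ^+ (p ^ l) = x by rewrite -cardK expf_card.
have iota_fixed x : iota x ^+ (p ^ k) = iota x.
  by apply: (exprp_fix_dvd (dvdn_gcdr m k)); apply/iota_onto; exists x.
apply: (@nucleus_iso_Lmap K (fun x => (iota x, 0))) => [x y [] | c d | x y | x y |].
- exact: iota_inj.
- rewrite middle_nucleus_Lmap_sigma_nid //.
  split=> [[/iota_onto[x _ <-] ->] | [x [<- <-]]]; first by exists x.
  by split=> //; apply/iota_onto; exists x.
- by rewrite iotaD // addr0.
- rewrite iotaM // /Lmap /pmul /= circ0r sigma0 /circk exprMn !iota_fixed.
  by congr (_, _); ring.
by rewrite iota1.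
Qed.

Section QuadraticNucleus.
Variables (K : finFieldType) (iota : K -> F) (s : K).
Local Notation N := (p ^ l)%N.
Local Notation re := (@re_part K p l).
Local Notation im := (@im_part K p l s).
Hypotheses (pcharKp : p \in [pchar K]) (cardK : #|K| = (p ^ (2 * l))%N).
Hypotheses (s_neq0 : s != 0) (s_frob : s ^+ N = - s) (iota_s2 : iota (s * s) = alpha).
Hypotheses (iota0 : iota 0 = 0) (iota1 : iota 1 = 1).
Hypothesis iotaD : forall x y, x ^+ N = x -> y ^+ N = y -> iota (x + y) = iota x + iota y.
Hypothesis iotaM : forall x y, x ^+ N = x -> y ^+ N = y -> iota (x * y) = iota x * iota y.
Hypothesis iota_inj : forall x y, x ^+ N = x -> y ^+ N = y -> iota x = iota y -> x = y.
Hypothesis iota_onto : forall w, w ^+ N = w <-> exists2 x, x ^+ N = x & iota x = w.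
Hypotheses (sigma_id : forall x, sigma x = x) (alpha_fixed : alpha ^+ N = alpha).
Hypothesis alpha_neq0 : alpha != 0.

Let K_invol (x : K) : x ^+ N ^+ N = x.
Proof. by rewrite -exprM -expnD addnn -mul2n -cardK expf_card. Qed.

Let re_fixed x : re x ^+ N = re x. Proof. exact: re_part_fixed. Qed.
Let im_fixed x : im x ^+ N = im x. Proof. exact: im_part_fixed. Qed.
Let re_imE x : x = re x + im x * s. Proof. exact: re_im_partE. Qed.

Let re_im_uniq u v : u ^+ N = u -> v ^+ N = v -> re (u + v * s) = u /\ im (u + v * s) = v.
Proof. exact: re_im_part_uniq. Qed.

Let fixedD (x y : K) : x ^+ N = x -> y ^+ N = y -> (x + y) ^+ N = x + y.
Proof. by move=> xN yN; rewrite exprpD // xN yN. Qed.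

Let fixedM (x y : K) : x ^+ N = x -> y ^+ N = y -> (x * y) ^+ N = x * y.
Proof. by move=> xN yN; rewrite exprMn xN yN. Qed.

Let iota_fixed (x : K) : x ^+ N = x -> iota x ^+ (p ^ k) = iota x.
Proof.
by move=> xN; apply: (exprp_fix_dvd (dvdn_gcdr m k)); apply/iota_onto; exists x.
Qed.

Definition quadratic_coords (x : K) : F * F := (iota (re x), iota (im x)).

Lemma quadratic_coords_inj : injective quadratic_coords.
Proof.
move=> x y [/(iota_inj (re_fixed x) (re_fixed y)) Dre].
move=> /(iota_inj (im_fixed x) (im_fixed y)) Dim.
by rewrite [x]re_imE Dre Dim -re_imE.
Qed.

Lemma quadratic_coords_onto c d :
  L (c, d) \in Nm <-> exists x, quadratic_coords x = (c, d).
Proof.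
rewrite middle_nucleus_Lmap_sigma_id //; split=> [[] | [x [<- <-]]].
  move=> /iota_onto[c1 c1N <-] /iota_onto[d1 d1N <-]; exists (c1 + d1 * s).
  by have [Dre Dim] := re_im_uniq c1N d1N; rewrite /quadratic_coords Dre Dim.
by split; apply/iota_onto; [exists (re x) | exists (im x)].
Qed.

Lemma quadratic_coordsD x y : quadratic_coords (x + y) =
  ((quadratic_coords x).1 + (quadratic_coords y).1,
   (quadratic_coords x).2 + (quadratic_coords y).2).
Proof. by rewrite /quadratic_coords /= (re_partD l) // (im_partD l) // !iotaD. Qed.

Lemma quadratic_coordsM x y :
  L (quadratic_coords (x * y)) = pmul (quadratic_coords x) (quadratic_coords y).
Proof.
have s2N : (s * s) ^+ N = s * s by rewrite exprMn s_frob mulrNN.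
have AN := re_fixed x; have BN := im_fixed x; have CN := re_fixed y; have DN := im_fixed y.
set A := re x in AN *; set B := im x in BN *; set C := re y in CN *; set D := im y in DN *.
have Dxy : x * y = (A * C + s * s * (B * D)) + (A * D + B * C) * s.
  by rewrite {1}[x]re_imE {1}[y]re_imE -/A -/B -/C -/D; ring.
have ACN := fixedM AN CN; have BDN := fixedM BN DN; have sBDN := fixedM s2N BDN.
have ADN := fixedM AN DN; have BCN := fixedM BN CN.
have [Dre Dim] := re_im_uniq (fixedD ACN sBDN) (fixedD ADN BCN).
rewrite /quadratic_coords Dxy Dre Dim (iotaD ACN sBDN) (iotaD ADN BCN).
rewrite (iotaM s2N BDN) iota_s2 (iotaM AN CN) (iotaM BN DN) (iotaM AN DN) (iotaM BN CN).
rewrite /Lmap /pmul /= !sigma_id /circk exprpD // !exprMn !iota_fixed //.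
rewrite (exprp_fix_dvd (dvdn_gcdr m k) alpha_fixed).
by congr (_, _); ring.
Qed.

Lemma quadratic_coords1 : quadratic_coords 1 = (1, 0).
Proof.
have := re_im_uniq (expr1n _ N) (expr0p pcharKp l).
by rewrite mul0r addr0 /quadratic_coords => -[-> ->]; rewrite iota0 iota1.
Qed.

Lemma nucleus_iso_quadratic : nucleus_iso p k r alpha K.
Proof.
exact: nucleus_iso_Lmap quadratic_coords_inj quadratic_coords_onto
  quadratic_coordsD quadratic_coordsM quadratic_coords1.
Qed.

End QuadraticNucleus.

Lemma nucleus_iso_sigma_id (K : finFieldType) : (forall x, sigma x = x) ->
  alpha ^+ (p ^ l) = alpha -> alpha != 0 -> (forall x : F, x ^+ 2 != alpha) ->
  #|K| = (p ^ (2 * l))%N -> nucleus_iso p k r alpha K.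
Proof.
move=> sigma_id alpha_fixed alpha_neq0 alpha_nsq cardK.
have pcharKp : p \in [pchar K] by apply: card_finPcharP cardK p_pr.
have [|iota [iota1 iotaD iotaM iota_inj iota_onto]] :=
  frob_fixed_embedding pcharKp cardF l_gt0 (dvdn_gcdl m k).
  by rewrite cardK mulnC expnM dvdn_pred_predX.
have iota0 : iota 0 = 0.
  by apply: (addrI (iota 0)); rewrite -iotaD ?expr0p ?addr0.
have [a a_fixed Da] := (iota_onto alpha).1 alpha_fixed.
have odd_N : odd (p ^ l) by rewrite oddX p_odd orbT.
have cardKN : #|K| = (p ^ l * p ^ l)%N by rewrite cardK mulnC expnM mulnn.
have [s Ds] := frob_fixed_square odd_N cardKN a_fixed.
have s_neq0 : s != 0.
  by apply: contra_neq alpha_neq0 => s0; rewrite -Da -Ds s0 mulr0 iota0.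
have s_frob : s ^+ (p ^ l) = - s.
  have /eqP : (s ^+ (p ^ l)) ^+ 2 = s ^+ 2 by rewrite -!exprM mulnC !exprM expr2 Ds a_fixed.
  rewrite eqf_sqr => /orP[/eqP sN | /eqP //].
  by have := alpha_nsq (iota s); rewrite expr2 -iotaM // Ds Da eqxx.
by apply: (@nucleus_iso_quadratic K iota s) => //; rewrite Ds.
Qed.

End Semifield.

Theorem theorem2 (p m k r : nat) (F : finFieldType) (alpha : F) :
  prime p -> odd p ->
  #|F| = (p ^ m)%N ->
  (0 < k)%N -> (k <= m./2)%N ->
  odd (m %/ gcdn m k) ->
  alpha ^+ (p ^ gcdn m k) = alpha ->
  alpha != 0 ->
  (forall x : F, x ^+ 2 != alpha) ->
  (r <= m./2)%N ->
  ((forall x : F, sigmar p r x = x) ->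
     forall K : finFieldType, #|K| = (p ^ (2 * gcdn m k))%N ->
       nucleus_iso p k r alpha K)
  /\
  ((exists x : F, sigmar p r x != x) ->
     forall K : finFieldType, #|K| = (p ^ gcdn m k)%N ->
       nucleus_iso p k r alpha K).
Proof.
move=> p_pr p_odd cardF k_gt0 k_le odd_m_gcd alpha_fixed alpha_neq0 alpha_nsq r_le.
split=> [sigma_id K cardK | sigma_nid K cardK].
  exact: (nucleus_iso_sigma_id p_pr p_odd cardF k_gt0 k_le odd_m_gcd
           sigma_id alpha_fixed alpha_neq0 alpha_nsq cardK).
exact: (nucleus_iso_sigma_nid p_pr p_odd cardF k_gt0 k_le odd_m_gcd
         sigma_nid r_le alpha_neq0 cardK).
Qed.
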